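(* Let $\theta$, $\epsilon>0$ and $\Lambda$ be as in the context. Let $a,b,d\in\mathbb{Z}$ with $d\neq0$, $(a,b)\neq(0,0)$ and $\gcd(a,b,d)=1$, let $\lambda=a\cos\theta-b\sin\theta$, so that $\lambda^*=a\sin\theta+b\cos\theta$, and let $w=(1,\lambda/d)$. Define $S\subset\mathbb{R}$ by $\{0\}\times S=(\Lambda+w\mathbb{R})\cap(\{0\}\times\mathbb{R})$, where $\Lambda+w\mathbb{R}=\{p+tw:\ p\in\Lambda,\ t\in\mathbb{R}\}$. If $\epsilon\ge 1/|\lambda^*|$, then $S$ is a dense subset of $\mathbb{R}$. If $0<\epsilon<1/|\lambda^*|$, then the closure of $S$ is $$\mathrm{cl}(S)=\left\{\frac{l+t\lambda^*}{d}:\ 0\le t\le\epsilon,\ l\in\mathbb{Z}\right\}.$$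
   Context: Fix $\theta$ with $\tan\theta$ irrational and $\epsilon>0$. Define $\Lambda_F=\{m\cos\theta-n\sin\theta:\ m,n\in\mathbb{Z},\ 0\le m\sin\theta+n\cos\theta<\epsilon\}$ and $\Lambda=\Lambda_F\times\mathbb{Z}\subset\mathbb{R}^2$. For $x=m\cos\theta-n\sin\theta$ with $m,n\in\mathbb{Z}$ (the integers $m,n$ are uniquely determined by $x$ since $\tan\theta$ is irrational), write $x^*=m\sin\theta+n\cos\theta$. *)

From Stdlib Require Import Reals ZArith.
Open Scope R_scope.

(* tan theta is irrational (this also excludes cos theta = 0, where Stdlib's
   total tan evaluates to 0). *)
Definition tan_irrational (theta : R) : Prop :=
  forall p q : Z, q <> 0%Z -> tan theta <> IZR p / IZR q.

Definition LamF (theta eps x : R) : Prop :=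
  exists m n : Z, x = IZR m * cos theta - IZR n * sin theta /\
    0 <= IZR m * sin theta + IZR n * cos theta < eps.

Definition Lam (theta eps : R) (p : R * R) : Prop :=
  LamF theta eps (fst p) /\ exists k : Z, snd p = IZR k.

Definition lam (theta : R) (a b : Z) : R := IZR a * cos theta - IZR b * sin theta.
Definition lamstar (theta : R) (a b : Z) : R := IZR a * sin theta + IZR b * cos theta.

Definition w (theta : R) (a b d : Z) : R * R := (1, lam theta a b / IZR d).

Definition Sset (theta eps : R) (a b d : Z) (y : R) : Prop :=
  exists (p : R * R) (t : R), Lam theta eps p /\
    fst p + t * fst (w theta a b d) = 0 /\
    snd p + t * snd (w theta a b d) = y.

Definition dense_in_R (A : R -> Prop) : Prop :=
  forall x e, 0 < e -> exists y, A y /\ Rabs (y - x) < e.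

Definition closure (A : R -> Prop) (y : R) : Prop :=
  forall e, 0 < e -> exists z, A z /\ Rabs (z - y) < e.

(* Writing p = (x, k) with x = m cos - n sin, the point p - x w lies on the
   line {0} x R, at height k - x lambda / d.  The rotation identity
   (m cos - n sin)(a cos - b sin) + (m sin + n cos)(a sin + b cos) = m a + n b
   turns d times this height into l + t lambda*, where t = x* lies in [0, eps)
   and l = k d - m a - n b.  Conversely, since gcd(a, b, d) = 1, every residue
   l is attained, and for fixed l the admissible t = x* are dense in R: they
   form a translate of the group d (Z sin + Z cos), which is dense because
   sin and cos are rationally independent.  Hence d cl(S) is the closed set
   {l + t lambda* : l in Z, 0 <= t <= eps}, a union of segments which covers R
   exactly when eps |lambda*| >= 1. *)

From Stdlib Require Import Reals ZArith Lra Lia Psatz.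
Open Scope R_scope.

Lemma Z_floor_exists (u : R) : exists l : Z, IZR l <= u < IZR l + 1.
Proof. destruct (base_Int_part u). exists (Int_part u). lra. Qed.

Definition Z_independent (x y : R) : Prop :=
  forall p q : Z, IZR p * x + IZR q * y = 0 -> p = 0%Z /\ q = 0%Z.

Lemma Z_independent_neq0_l x y : Z_independent x y -> x <> 0.
Proof. intros H E. destruct (H 1%Z 0%Z); [rewrite E; ring | lia]. Qed.

Lemma Z_independent_neq0_r x y : Z_independent x y -> y <> 0.
Proof. intros H E. destruct (H 0%Z 1%Z); [rewrite E; ring | lia]. Qed.

Lemma Rabs_Z_sign (x : R) : exists s : Z, (s = 1 \/ s = -1)%Z /\ Rabs x = IZR s * x.
Proof.
  destruct (Rcase_abs x).
  - exists (-1)%Z. split; [now right|]. rewrite Rabs_left by lra. simpl; ring.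
  - exists 1%Z. split; [now left|]. rewrite Rabs_right by lra. simpl; ring.
Qed.

Lemma Z_independent_abs x y : Z_independent x y -> Z_independent (Rabs x) (Rabs y).
Proof.
  intros H p q E.
  destruct (Rabs_Z_sign x) as (sx & Hsx & Ex), (Rabs_Z_sign y) as (sy & Hsy & Ey).
  destruct (H (p * sx)%Z (q * sy)%Z) as [Hp Hq].
  { rewrite !mult_IZR, <- E, Ex, Ey. ring. }
  destruct Hsx, Hsy; subst; lia.
Qed.

Lemma Z_independent_scale k x y :
  k <> 0 -> Z_independent x y -> Z_independent (k * x) (k * y).
Proof.
  intros Hk H p q E. apply H.
  apply (Rmult_eq_reg_l k); [|exact Hk]. rewrite Rmult_0_r, <- E. ring.
Qed.

Section IntegerSpan.
Variables al be : R.

Definition Zspan (z : R) : Prop := exists m n : Z, z = IZR m * al + IZR n * be.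

Lemma Zspan_lin (k j : Z) x y :
  Zspan x -> Zspan y -> Zspan (IZR k * x + IZR j * y).
Proof.
  intros (m1 & n1 & ->) (m2 & n2 & ->).
  exists (k * m1 + j * m2)%Z, (k * n1 + j * n2)%Z.
  rewrite !plus_IZR, !mult_IZR. ring.
Qed.

Lemma Zspan_abs_l : Zspan (Rabs al).
Proof. destruct (Rabs_Z_sign al) as (s & _ & ->). exists s, 0%Z. ring. Qed.

Lemma Zspan_abs_r : Zspan (Rabs be).
Proof. destruct (Rabs_Z_sign be) as (s & _ & ->). exists 0%Z, s. ring. Qed.

Lemma Zspan_euclid_step x y :
  Zspan x -> Zspan y -> Z_independent x y -> 0 < y ->
  exists r, Zspan r /\ Z_independent y r /\ 0 < r < y /\ (y < x -> 2 * r < x).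
Proof.
  intros Gx Gy Hxy Hy.
  destruct (Z_floor_exists (x / y)) as [k Hk].
  assert (Hkx : IZR k * y <= x < IZR k * y + y).
  { assert (Hq : x = x / y * y) by (field; lra). rewrite Hq. split; nra. }
  exists (IZR 1 * x + IZR (- k) * y). rewrite opp_IZR.
  split; [|split; [|split]].
  - rewrite <- opp_IZR. now apply Zspan_lin.
  - intros p q E.
    destruct (Hxy q (p - q * k)%Z) as [Hq Hpq].
    { rewrite minus_IZR, mult_IZR, <- E. simpl. ring. }
    split; lia.
  - split; [|simpl; lra].
    assert (Hr : x - IZR k * y <> 0).
    { intro E. destruct (Hxy 1%Z (- k)%Z); [rewrite opp_IZR; simpl; lra | lia]. }
    simpl. lra.
  - intros Hyx.
    assert (Hk1 : 1 <= IZR k).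
    { apply IZR_le, Z.lt_pred_le, lt_IZR. simpl. nra. }
    simpl. nra.
Qed.

(* Two Euclidean steps at least halve the second entry of the pair. *)
Lemma Zspan_halving (N : nat) : forall x y,
  Zspan x -> Zspan y -> Z_independent x y -> 0 < x -> 0 < y ->
  exists z, Zspan z /\ 0 < z /\ 2 ^ N * z <= y.
Proof.
  induction N as [|N IH]; intros x y Gx Gy Hxy Hx Hy.
  - exists y. simpl. repeat split; auto; lra.
  - destruct (Zspan_euclid_step x y Gx Gy Hxy Hy) as (r1 & G1 & I1 & R1 & _).
    destruct (Zspan_euclid_step y r1 Gy G1 I1 ltac:(lra)) as (r2 & G2 & I2 & R2 & H2).
    destruct (IH r1 r2 G1 G2 I2 ltac:(lra) ltac:(lra)) as (z & Gz & Hz & Hz2).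
    exists z. simpl. repeat split; auto. specialize (H2 ltac:(lra)). lra.
Qed.

Lemma Zspan_small :
  Z_independent al be -> forall del, 0 < del -> exists z, Zspan z /\ 0 < z < del.
Proof.
  intros H del Hdel.
  pose proof (Rabs_pos_lt _ (Z_independent_neq0_l _ _ H)) as Ha.
  pose proof (Rabs_pos_lt _ (Z_independent_neq0_r _ _ H)) as Hb.
  destruct (Pow_x_infinity 2 ltac:(rewrite Rabs_right; lra) (2 * Rabs be / del))
    as [N HN].
  specialize (HN N (Nat.le_refl N)). rewrite Rabs_right in HN by (apply Rle_ge, pow_le; lra).
  destruct (Zspan_halving N _ _ Zspan_abs_l Zspan_abs_r (Z_independent_abs _ _ H) Ha Hb)
    as (z & Gz & Hz & HzN).
  exists z. repeat split; auto.
  assert (Hb2 : 2 * Rabs be <= 2 ^ N * del).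
  { replace (2 * Rabs be) with (2 * Rabs be / del * del) by (field; lra). nra. }
  nra.
Qed.

Lemma Zspan_dense : Z_independent al be ->
  forall u v, u < v -> exists m n : Z, u < IZR m * al + IZR n * be < v.
Proof.
  intros H u v Huv.
  destruct (Zspan_small H (v - u)) as (z & (m & n & Ez) & Hz); [lra|].
  destruct (Z_floor_exists (u / z)) as [k Hk].
  exists ((k + 1) * m)%Z, ((k + 1) * n)%Z.
  rewrite !mult_IZR, plus_IZR.
  replace (_ * IZR m * al + _ * IZR n * be) with ((IZR k + 1) * z) by (rewrite Ez; ring).
  assert (Hu : u = u / z * z) by (field; lra). split; nra.
Qed.

End IntegerSpan.

Definition Z_plus_segment (L e u : R) : Prop :=
  exists (l : Z) (t : R), 0 <= t <= e /\ u = IZR l + t * L.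

Lemma Z_plus_segment_opp L e u : Z_plus_segment L e u -> Z_plus_segment (- L) e (- u).
Proof.
  intros (l & t & Ht & ->). exists (- l)%Z, t. split; [exact Ht|]. rewrite opp_IZR. ring.
Qed.

Lemma closure_Z_plus_segment_opp L e u :
  closure (Z_plus_segment L e) u -> closure (Z_plus_segment (- L) e) (- u).
Proof.
  intros H r Hr. destruct (H r Hr) as (z & Hz & Hzu).
  exists (- z). split; [now apply Z_plus_segment_opp|].
  replace (- z - - u) with (- (z - u)) by ring. now rewrite Rabs_Ropp.
Qed.

Lemma Z_plus_segment_cover_pos L e u : 0 < L -> 1 <= e * L -> Z_plus_segment L e u.
Proof.
  intros HL He. destruct (Z_floor_exists u) as [l Hl].
  exists l, ((u - IZR l) / L).
  assert (Ht : (u - IZR l) / L * L = u - IZR l) by (field; lra).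
  split; [split; nra | lra].
Qed.

Lemma Z_plus_segment_cover L e u : L <> 0 -> 1 <= e * Rabs L -> Z_plus_segment L e u.
Proof.
  intros HL He. destruct (Rcase_abs L) as [Hneg|Hpos].
  - rewrite Rabs_left in He by exact Hneg.
    rewrite <- (Ropp_involutive L), <- (Ropp_involutive u).
    apply Z_plus_segment_opp, Z_plus_segment_cover_pos; lra.
  - rewrite Rabs_right in He by exact Hpos. apply Z_plus_segment_cover_pos; lra.
Qed.

(* An approximant l' + t' L with l' <= floor u lies below floor u + e L, one with
   l' > floor u lies above floor u + 1; so u <= floor u + e L. *)
Lemma Z_plus_segment_closed_pos L e u :
  0 < L -> closure (Z_plus_segment L e) u -> Z_plus_segment L e u.
Proof.
  intros HL Hcl. destruct (Z_floor_exists u) as [l Hl].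
  assert (Hu : u <= IZR l + e * L).
  { apply Rnot_lt_le. intro Hlt.
    set (r := Rmin (u - IZR l - e * L) (IZR l + 1 - u)).
    assert (Hr : 0 < r /\ r <= u - IZR l - e * L /\ r <= IZR l + 1 - u).
    { unfold r. split; [apply Rmin_glb_lt; lra | split; [apply Rmin_l | apply Rmin_r]]. }
    destruct (Hcl r (proj1 Hr)) as (z & (l' & t' & Ht' & ->) & Hz).
    apply Rabs_def2 in Hz.
    assert (0 <= t' * L <= e * L) by (split; nra).
    destruct (Z_le_gt_dec l' l) as [Hll|Hll].
    - apply IZR_le in Hll. lra.
    - apply Z.gt_lt, Zlt_le_succ, IZR_le in Hll. rewrite succ_IZR in Hll.
      lra. }
  exists l, ((u - IZR l) / L).
  assert (Ht : (u - IZR l) / L * L = u - IZR l) by (field; lra).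
  split; [split; nra | lra].
Qed.

Lemma Z_plus_segment_closed L e u :
  L <> 0 -> closure (Z_plus_segment L e) u -> Z_plus_segment L e u.
Proof.
  intros HL Hcl. destruct (Rcase_abs L) as [Hneg|Hpos].
  - rewrite <- (Ropp_involutive L), <- (Ropp_involutive u).
    apply Z_plus_segment_opp, Z_plus_segment_closed_pos; [lra|].
    now apply closure_Z_plus_segment_opp.
  - apply Z_plus_segment_closed_pos; [lra | exact Hcl].
Qed.

Lemma cos_neq0_of_tan_irrational theta : tan_irrational theta -> cos theta <> 0.
Proof.
  intros Htan E. apply (Htan 0%Z 1%Z); [lia|].
  unfold tan. rewrite E, Rdiv_0_r. simpl. field.
Qed.

Lemma sin_cos_Z_independent theta :
  tan_irrational theta -> Z_independent (sin theta) (cos theta).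
Proof.
  intros Htan p q E.
  pose proof (cos_neq0_of_tan_irrational theta Htan) as Hc.
  destruct (Z.eq_dec p 0) as [->|Hp].
  - split; [reflexivity|]. apply eq_IZR.
    apply (Rmult_eq_reg_r (cos theta)); [|exact Hc]. simpl in *. lra.
  - exfalso. apply (Htan (- q)%Z p Hp).
    assert (Hp' : IZR p <> 0) by (apply not_0_IZR; exact Hp).
    unfold tan. rewrite opp_IZR.
    field_simplify_eq; [nra | split; assumption].
Qed.

Lemma lamstar_neq0 theta a b :
  tan_irrational theta -> (a, b) <> (0%Z, 0%Z) -> lamstar theta a b <> 0.
Proof.
  intros Htan Hab E.
  destruct (sin_cos_Z_independent theta Htan a b) as [-> ->]; [|now apply Hab].
  unfold lamstar in E. lra.
Qed.

(* lambda and lambda* are the two coordinates of a rotation of (a, b), so their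
   products pair up into the Euclidean inner product. *)
Lemma lam_mul_lam theta m n a b :
  lam theta m n * lam theta a b =
  IZR m * IZR a + IZR n * IZR b - lamstar theta m n * lamstar theta a b.
Proof.
  unfold lam, lamstar. pose proof (sin2_cos2 theta) as Hsc. unfold Rsqr in Hsc.
  transitivity ((IZR m * IZR a + IZR n * IZR b) * (sin theta * sin theta + cos theta * cos theta)
                - (IZR m * sin theta + IZR n * cos theta) * (IZR a * sin theta + IZR b * cos theta));
    [ring | rewrite Hsc; ring].
Qed.

Section Window.
Variables (theta eps : R) (a b d : Z).
Hypothesis Htan : tan_irrational theta.
Hypothesis Hd : d <> 0%Z.
Hypothesis Hg : Z.gcd (Z.gcd a b) d = 1%Z.

Lemma IZR_d_neq0 : IZR d <> 0.
Proof. now apply not_0_IZR. Qed.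

Lemma Sset_scaled y : Sset theta eps a b d y ->
  exists (l : Z) (t : R), 0 <= t < eps /\ y * IZR d = IZR l + t * lamstar theta a b.
Proof.
  intros ([x k'] & s & ((m & n & Ex & Ht) & k & Ek) & E1 & E2).
  simpl in *. pose proof IZR_d_neq0.
  exists (k * d - m * a - n * b)%Z, (lamstar theta m n). split; [exact Ht|].
  rewrite <- E2, Ek. replace s with (- lam theta m n) by (unfold lam; lra).
  rewrite !minus_IZR, !mult_IZR.
  transitivity (IZR k * IZR d - lam theta m n * lam theta a b); [field; assumption|].
  rewrite lam_mul_lam. ring.
Qed.

Lemma Sset_intro (k m n : Z) : 0 <= lamstar theta m n < eps ->
  Sset theta eps a b d
    ((IZR (k * d - m * a - n * b) + lamstar theta m n * lamstar theta a b) / IZR d).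
Proof.
  intros Ht. pose proof IZR_d_neq0.
  exists (lam theta m n, IZR k), (- lam theta m n).
  split; [split; [exists m, n; split; [reflexivity | exact Ht] | exists k; reflexivity]|].
  simpl. split; [ring|].
  rewrite !minus_IZR, !mult_IZR.
  apply (Rmult_eq_reg_r (IZR d)); [|assumption].
  transitivity (IZR k * IZR d - lam theta m n * lam theta a b); [field; assumption|].
  rewrite lam_mul_lam. field. assumption.
Qed.

(* Bezout gives one solution (k0, m0, n0) of k d - m a - n b = l; the others include
   (k0 + m' a + n' b, m0 + d m', n0 + d n'), whose x* sweep a translate of
   d (Z sin + Z cos). *)
Lemma lamstar_dense_on_residue (l : Z) u v : u < v -> exists k m n : Z,
  u < lamstar theta m n < v /\ (k * d - m * a - n * b = l)%Z.
Proof.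
  intros Huv.
  destruct (Z.gcd_bezout a b _ eq_refl) as (x & y & Hxy).
  destruct (Z.gcd_bezout (Z.gcd a b) d _ Hg) as (u1 & v1 & Huv1).
  set (m0 := (- l * u1 * x)%Z). set (n0 := (- l * u1 * y)%Z).
  assert (Hind : Z_independent (IZR d * sin theta) (IZR d * cos theta))
    by (apply Z_independent_scale; [apply IZR_d_neq0 | now apply sin_cos_Z_independent]).
  destruct (Zspan_dense _ _ Hind (u - lamstar theta m0 n0) (v - lamstar theta m0 n0))
    as (m' & n' & Hmn); [lra|].
  exists (m' * a + n' * b + l * v1)%Z, (d * m' + m0)%Z, (d * n' + n0)%Z. split.
  - unfold lamstar in *. rewrite !plus_IZR, !mult_IZR. lra.
  - rewrite <- Hxy in Huv1. unfold m0, n0.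
    transitivity (l * (u1 * (x * a + y * b) + v1 * d))%Z; [ring | rewrite Huv1; ring].
Qed.

Lemma Sset_approx (l : Z) t0 e : 0 < eps -> 0 <= t0 <= eps -> 0 < e ->
  exists z, Sset theta eps a b d z /\
            Rabs (z - (IZR l + t0 * lamstar theta a b) / IZR d) < e.
Proof.
  intros Heps Ht0 He. pose proof IZR_d_neq0 as HD.
  set (L := lamstar theta a b).
  set (del := e / (Rabs L + 1)).
  assert (HL1 : 0 < Rabs L + 1) by (pose proof (Rabs_pos L); lra).
  assert (Hdel : 0 < del) by (unfold del; apply Rdiv_lt_0_compat; lra).
  destruct (lamstar_dense_on_residue l (Rmax 0 (t0 - del)) (Rmin eps (t0 + del)))
    as (k & m & n & Ht & Hl).
  { apply Rmax_lub_lt; apply Rmin_glb_lt; lra. }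
  pose proof (Rmax_l 0 (t0 - del)). pose proof (Rmax_r 0 (t0 - del)).
  pose proof (Rmin_l eps (t0 + del)). pose proof (Rmin_r eps (t0 + del)).
  set (t := lamstar theta m n) in *.
  exists ((IZR (k * d - m * a - n * b) + t * L) / IZR d).
  split; [apply Sset_intro; unfold t in *; lra|].
  rewrite Hl.
  replace ((IZR l + t * L) / IZR d - (IZR l + t0 * L) / IZR d)
    with ((t - t0) * L * / IZR d) by (field; assumption).
  rewrite !Rabs_mult, Rabs_inv.
  assert (Htt : Rabs (t - t0) < del) by (apply Rabs_def1; lra).
  assert (Hd1 : 1 <= Rabs (IZR d)) by (rewrite <- abs_IZR; apply IZR_le; lia).
  assert (Hinv : 0 < / Rabs (IZR d) <= 1).
  { split; [apply Rinv_0_lt_compat; lra|].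
    rewrite <- Rinv_1. apply Rinv_le_contravar; lra. }
  assert (Hdel_e : del * (Rabs L + 1) = e) by (unfold del; field; lra).
  assert (Hprod : Rabs (t - t0) * Rabs L < e).
  { pose proof (Rabs_pos (t - t0)). pose proof (Rabs_pos L). nra. }
  pose proof (Rmult_le_pos _ _ (Rabs_pos (t - t0)) (Rabs_pos L)). nra.
Qed.

Lemma closure_Sset_scaled y : closure (Sset theta eps a b d) y ->
  closure (Z_plus_segment (lamstar theta a b) eps) (y * IZR d).
Proof.
  intros Hcl r Hr. pose proof IZR_d_neq0 as HD.
  assert (HDa : 0 < Rabs (IZR d)) by (now apply Rabs_pos_lt).
  destruct (Hcl (r / Rabs (IZR d))) as (z & Sz & Hz); [now apply Rdiv_lt_0_compat|].
  destruct (Sset_scaled z Sz) as (l & t & Ht & Ez).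
  exists (z * IZR d). split; [exists l, t; split; [lra | exact Ez]|].
  replace (z * IZR d - y * IZR d) with ((z - y) * IZR d) by ring.
  rewrite Rabs_mult.
  replace r with (r / Rabs (IZR d) * Rabs (IZR d)) by (field; lra).
  now apply Rmult_lt_compat_r.
Qed.

End Window.

Lemma eq_div_of_mul_eq (y u D : R) : D <> 0 -> y * D = u -> y = u / D.
Proof. intros HD <-. field. exact HD. Qed.

Theorem theorem2 (theta eps : R) (a b d : Z) :
  tan_irrational theta -> 0 < eps ->
  d <> 0%Z -> (a, b) <> (0%Z, 0%Z) -> Z.gcd (Z.gcd a b) d = 1%Z ->
  (1 / Rabs (lamstar theta a b) <= eps -> dense_in_R (Sset theta eps a b d)) /\
  (eps < 1 / Rabs (lamstar theta a b) ->
     forall y : R, closure (Sset theta eps a b d) y <->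
       exists (t : R) (l : Z), 0 <= t <= eps /\
         y = (IZR l + t * lamstar theta a b) / IZR d).
Proof.
  intros Htan Heps Hd Hab Hg.
  pose proof (lamstar_neq0 theta a b Htan Hab) as HL.
  pose proof (IZR_d_neq0 d Hd) as HD.
  assert (HLa : 0 < Rabs (lamstar theta a b)) by now apply Rabs_pos_lt.
  split.
  - intros Hbig y e He.
    destruct (Z_plus_segment_cover (lamstar theta a b) eps (y * IZR d) HL)
      as (l & t & Ht & Ey).
    { replace 1 with (1 / Rabs (lamstar theta a b) * Rabs (lamstar theta a b))
        by (field; lra). nra. }
    rewrite (eq_div_of_mul_eq _ _ _ HD Ey).
    exact (Sset_approx theta eps a b d Htan Hd Hg l t e Heps Ht He).
  (* The description of the closure holds for every eps > 0; for
     eps >= 1 / |lambda*| it is all of R. *)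
  - intros _ y. split.
    + intros Hcl.
      destruct (Z_plus_segment_closed _ _ _ HL (closure_Sset_scaled theta eps a b d Hd y Hcl))
        as (l & t & Ht & Ey).
      exists t, l. split; [exact Ht|]. exact (eq_div_of_mul_eq _ _ _ HD Ey).
    + intros (t & l & Ht & ->) e He.
      exact (Sset_approx theta eps a b d Htan Hd Hg l t e Heps Ht He).
Qed.
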